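(* Let $(\mathbf{X},\mathbf{p})$ be a $\{1,k\}$-payment equilibrium and let $z<k$ be an integer such that: agents in $N_L$ are $(2-1/k)$-EFX towards each other; $p(X_j)\in[z,k+z]$ for all $j\in N_L$; and $p(X_i)\in[k,k+z]$ for all $i\in N_H$. If some agent $i$ is not $(2-1/k)$-EFX towards another agent $j$, then $i\in N_H$, $j\in N_L$, $\alpha_i=1$, and $X_j\subseteq\mathsf{MPB}_i$.
   Context: Fix $k>1$. Agents $N$, chores $M$, additive costs $c_i(e)\in\{1,k\}$; as a standing assumption every agent $i$ has at least one item $e$ with $c_i(e)=1$. An allocation $\mathbf{X}$ partitions $M$ into bundles $X_i$. A payment vector assigns $p(e)>0$, $p(X)=\sum_{e\in X}p(e)$; $\alpha_{i,e}=c_i(e)/p(e)$, $\alpha_i=\min_{e\in M}\alpha_{i,e}$, $\mathsf{MPB}_i=\{e:\alpha_{i,e}=\alpha_i\}$; $(\mathbf{X},\mathbf{p})$ is a $\{1,k\}$-payment equilibrium if $X_i\subseteq\mathsf{MPB}_i$ for all $i$ and $p(e)\in\{1,k\}$ for all $e$. $L=\{e:p(e)=1\}$, $H=\{e:p(e)=k\}$, $N_L=\{i:X_i\subseteq L\}$, $N_H=\{i:|X_i\cap H|\ge1\}$. Agent $i$ is $\beta$-EFX towards $j$ if $X_i=\emptyset$ or $c_i(X_i\setminus\{e\})\le\beta\,c_i(X_j)$ for all $e\in X_i$. *)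

From mathcomp Require Import all_boot all_order all_algebra.
Set Implicit Arguments. Unset Strict Implicit. Unset Printing Implicit Defensive.
Import Order.TTheory GRing.Theory Num.Theory.
Local Open Scope ring_scope.

Section Defs.
Variables (R : realFieldType) (N M : finType).
Variables (k : R) (c : N -> M -> R) (X : N -> {set M}) (p : M -> R).

Definition cost (i : N) (A : {set M}) : R := \sum_(e in A) c i e.
Definition pay (A : {set M}) : R := \sum_(e in A) p e.

Definition alpha (i : N) (e : M) : R := c i e / p e.

(* alpha_i = min_{e in M} alpha_{i,e} (M nonempty; 0 is a dummy if M is empty) *)
Definition alpha_min (i : N) : R :=
  match [pick e : M] with
  | Some e0 => \big[Num.min/alpha i e0]_(e : M) alpha i e
  | None => 0
  end.

Definition MPB (i : N) : {set M} := [set e | alpha i e == alpha_min i].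

Definition is_allocation : Prop :=
  (forall i j, i != j -> [disjoint X i & X j]) /\ (forall e : M, exists i, e \in X i).

Definition payment_equilibrium : Prop :=
  is_allocation /\ (forall i, X i \subset MPB i) /\ (forall e, p e = 1 \/ p e = k).

Definition Lset : {set M} := [set e | p e == 1].
Definition Hset : {set M} := [set e | p e == k].
Definition N_L : {set N} := [set i | X i \subset Lset].
Definition N_H : {set N} := [set i | 1 <= #|X i :&: Hset|]%N.

Definition EFX (beta : R) (i j : N) : Prop :=
  X i = set0 \/ forall e, e \in X i -> cost i (X i :\ e) <= beta * cost i (X j).

End Defs.

(* In a {1,k}-payment equilibrium every item of X_i has cost alpha_i p(e) for
   agent i and every other item costs at least alpha_i p(e); with unit-or-k
   costs this forces alpha_i in {1, 1/k}, and the EFX condition becomes a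
   comparison of payments.  An agent whose bundle is paid less than 2k is
   (2-1/k)-EFX towards any bundle paid at least k, which rules out every
   violation except from N_H towards N_L.  If alpha_i = 1/k the bundle of i
   consists of items paid k and its EFX-cost is at most z <= p(X_j) <= c_i(X_j);
   if an item of X_j had cost k for i, then c_i(X_j) >= p(X_j) + k - 1, which
   again dominates c_i(X_i \ e) <= p(X_i) - 1. *)
From mathcomp Require Import all_boot all_order all_algebra.
From mathcomp Require Import ring lra.
Set Implicit Arguments. Unset Strict Implicit. Unset Printing Implicit Defensive.
Import Order.TTheory GRing.Theory Num.Theory.
Local Open Scope ring_scope.

Section AlphaMin.
Variables (R : realFieldType) (N M : finType) (c : N -> M -> R) (p : M -> R).

Lemma alpha_min_le i e : alpha_min c p i <= alpha c p i e.
Proof.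
rewrite /alpha_min; case: pickP => [e0 _|/(_ e)//].
by rewrite (bigD1 e) //= ge_min lexx.
Qed.

Lemma alpha_min_attained i (e0 : M) : exists e, alpha_min c p i = alpha c p i e.
Proof.
rewrite /alpha_min; case: pickP => [e1 _|/(_ e0)//].
elim/big_ind: _ => [|x y [ex ->] [ey ->]|x _]; [by exists e1| |by exists x].
by case: leP => _; [exists ex | exists ey].
Qed.

End AlphaMin.

Section PaymentEquilibrium.
Variables (R : realFieldType) (N M : finType) (k : R).
Variables (c : N -> M -> R) (X : N -> {set M}) (p : M -> R).
Hypothesis k_gt1 : 1 < k.
Hypothesis c_1k : forall i e, c i e = 1 \/ c i e = k.
Hypothesis unit_item : forall i, exists e, c i e = 1.
Hypothesis X_MPB : forall i, X i \subset MPB c p i.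
Hypothesis p_1k : forall e, p e = 1 \/ p e = k.

Let k_gt0 : 0 < k := lt_trans ltr01 k_gt1.

Let inv_k_lt1 : k^-1 < 1.
Proof. by rewrite invf_lt1. Qed.

Lemma p_ge1 e : 1 <= p e.
Proof. by case: (p_1k e) => ->; rewrite ?lexx ?ltW. Qed.

Lemma c_ge1 i e : 1 <= c i e.
Proof. by case: (c_1k i e) => ->; rewrite ?lexx ?ltW. Qed.

Lemma cost_ge0 i A : 0 <= cost c i A.
Proof. by apply: sumr_ge0 => e _; apply: le_trans (c_ge1 i e). Qed.

Lemma alpha_min_eq1_or_inv i : alpha_min c p i = 1 \/ alpha_min c p i = k^-1.
Proof.
have [e1 c_e1] := unit_item i.
have := alpha_min_le c p i e1; have [e ->] := alpha_min_attained c p i e1.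
rewrite /alpha c_e1; case: (c_1k i e) => ->; case: (p_1k e) => ->;
  rewrite ?divr1 ?mul1r ?divff ?gt_eqF // => alpha_le; [by left | by right | | by left].
(* the case alpha_i = k is excluded by alpha_i <= alpha_{i,e1} = 1/p(e1) <= 1 *)
have := k_gt1; have := inv_k_lt1.
by case: (p_1k e1) alpha_le => ->; rewrite ?invr1; lra.
Qed.

Lemma p_gt0 e : 0 < p e.
Proof. exact: lt_le_trans ltr01 (p_ge1 e). Qed.

Lemma alpha_min_gt0 i : 0 < alpha_min c p i.
Proof.
by case: (alpha_min_eq1_or_inv i) => ->; rewrite ?invr_gt0 ?ltr01.
Qed.

Lemma cost_MPB i e : e \in X i -> c i e = alpha_min c p i * p e.
Proof.
move/(subsetP (X_MPB i)); rewrite inE => /eqP <-.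
by rewrite /alpha mulfVK // gt_eqF ?p_gt0.
Qed.

Lemma alpha_min_pay_le_cost i A : alpha_min c p i * pay p A <= cost c i A.
Proof.
rewrite /pay mulr_sumr; apply: ler_sum => e _.
by rewrite -ler_pdivlMr ?p_gt0 // alpha_min_le.
Qed.

Lemma cost_bundle_setD1 i e :
  e \in X i -> cost c i (X i :\ e) = alpha_min c p i * (pay p (X i) - p e).
Proof.
move=> eXi; rewrite /pay (big_setD1 e eXi) /= [p e + _]addrC addrK mulr_sumr.
by apply: eq_bigr => x /setD1P[_]; apply: cost_MPB.
Qed.

Lemma N_LP j : reflect (forall e, e \in X j -> p e = 1) (j \in N_L X p).
Proof.
rewrite inE; apply: (iffP subsetP) => [sub e /sub | X1 e /X1 pe1].
  by rewrite inE => /eqP.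
by rewrite inE pe1.
Qed.

Lemma notin_N_H j : j \notin N_H k X p -> j \in N_L X p.
Proof.
rewrite inE card_gt0 negbK => /eqP XH0; apply/N_LP => e eXj.
case: (p_1k e) => // pek.
by have := in_set0 e; rewrite -XH0 !inE eXj pek eqxx.
Qed.

Lemma pay_le_cost i (A : {set M}) : {in A, forall e, p e = 1} -> pay p A <= cost c i A.
Proof. by move=> A1; apply: ler_sum => e eA; rewrite A1 // c_ge1. Qed.

Lemma cost_N_L_ge i j e :
  j \in N_L X p -> e \in X j -> pay p (X j) - 1 + c i e <= cost c i (X j).
Proof.
move=> /N_LP Xj1 eXj.
have := pay_le_cost i (sub_in1 (subsetP (subD1set (X j) e)) Xj1).
by rewrite /cost /pay !(big_setD1 e eXj) /= Xj1 //; lra.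
Qed.

Lemma EFX_of_cost_le beta i j : 1 <= beta ->
  (forall e, e \in X i -> cost c i (X i :\ e) <= cost c i (X j)) ->
  EFX c X beta i j.
Proof.
move=> beta_ge1 le_cost; right => e eXi.
by apply: le_trans (le_cost e eXi) _; rewrite ler_peMl ?cost_ge0.
Qed.

Lemma EFX_of_pay_lt i j :
  pay p (X i) < 2 * k -> k <= pay p (X j) -> EFX c X (2 - k^-1) i j.
Proof.
move=> pay_i pay_j; right => e eXi; rewrite cost_bundle_setD1 //.
set a := alpha_min c p i; have a_gt0 : 0 < a := alpha_min_gt0 i.
have beta_ge0 : 0 <= 2 - k^-1 by have := inv_k_lt1; lra.
have le_2k1 : a * (pay p (X i) - p e) <= a * (2 * k - 1).
  by rewrite ler_pM2l //; have := p_ge1 e; lra.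
have eq_2k1 : a * (2 * k - 1) = (2 - k^-1) * (a * k).
  by field; rewrite gt_eqF.
have le_pay_j : (2 - k^-1) * (a * k) <= (2 - k^-1) * (a * pay p (X j)).
  by rewrite ler_wpM2l // ler_pM2l.
have le_cost_j : (2 - k^-1) * (a * pay p (X j)) <= (2 - k^-1) * cost c i (X j).
  by rewrite ler_wpM2l // alpha_min_pay_le_cost.
lra.
Qed.

Lemma EFX_of_alpha_min_inv i j : alpha_min c p i = k^-1 ->
  pay p (X i) - k <= cost c i (X j) -> EFX c X (2 - k^-1) i j.
Proof.
move=> a_inv pay_le; apply: EFX_of_cost_le => [|e eXi]; first by have := inv_k_lt1; lra.
have pek : p e = k.
  have := c_ge1 i e; rewrite cost_MPB // a_inv.
  by case: (p_1k e) => // ->; rewrite mulr1; have := inv_k_lt1; lra.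
have := cost_ge0 i (X i :\ e); rewrite cost_bundle_setD1 // a_inv pek => ge0.
rewrite pmulr_rge0 ?invr_gt0 // in ge0.
by apply: le_trans pay_le; rewrite ler_piMl // ltW.
Qed.

Lemma EFX_of_alpha_min1 i j : alpha_min c p i = 1 ->
  pay p (X i) - 1 <= cost c i (X j) -> EFX c X (2 - k^-1) i j.
Proof.
move=> a1 pay_le; apply: EFX_of_cost_le => [|e eXi]; first by have := inv_k_lt1; lra.
by rewrite cost_bundle_setD1 // a1 mul1r; have := p_ge1 e; lra.
Qed.

End PaymentEquilibrium.

Theorem lemma9 (R : realFieldType) (N M : finType) (k : R)
  (c : N -> M -> R) (X : N -> {set M}) (p : M -> R) (z : int) :
  1 < k ->
  (forall i e, c i e = 1 \/ c i e = k) ->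
  (forall i, exists e, c i e = 1) ->
  payment_equilibrium k c X p ->
  z%:~R < k ->
  (forall i j, i \in N_L X p -> j \in N_L X p -> i != j ->
     EFX c X (2 - k^-1) i j) ->
  (forall j, j \in N_L X p -> z%:~R <= pay p (X j) <= k + z%:~R) ->
  (forall i, i \in N_H k X p -> k <= pay p (X i) <= k + z%:~R) ->
  forall i j, i != j -> ~ EFX c X (2 - k^-1) i j ->
    [/\ i \in N_H k X p, j \in N_L X p, alpha_min c p i = 1 & X j \subset MPB c p i].
Proof.
move=> k_gt1 c_1k unit_item [_ [X_MPB p_1k]] z_lt_k EFX_N_L pay_N_L pay_N_H.
move=> i j i_neq_j not_EFX.
have EFX_pay := EFX_of_pay_lt k_gt1 c_1k unit_item X_MPB p_1k.
have in_N_L := notin_N_H (X := X) p_1k.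
have pay_lt_2k l : pay p (X l) < 2 * k.
  by case: (boolP (l \in N_H k X p)) => [/pay_N_H | /in_N_L/pay_N_L] /andP[_]; lra.
have i_N_H : i \in N_H k X p.
  apply: contraT => /in_N_L i_N_L; exfalso; apply: not_EFX.
  case: (boolP (j \in N_H k X p)) => [/pay_N_H/andP[j_ge _] | /in_N_L j_N_L].
    exact: EFX_pay.
  exact: EFX_N_L.
have j_N_L : j \in N_L X p.
  case: (boolP (j \in N_H k X p)) => [/pay_N_H/andP[j_ge _] | /in_N_L //].
  by exfalso; apply: not_EFX; apply: EFX_pay.
have /andP[z_le_j _] := pay_N_L j j_N_L.
have /andP[_ i_le] := pay_N_H i i_N_H.
have /N_LP Xj1 := j_N_L.
have j_pay_le := pay_le_cost k_gt1 c_1k i Xj1.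
have alpha1 : alpha_min c p i = 1.
  case: (alpha_min_eq1_or_inv k_gt1 c_1k unit_item p_1k i) => // a_inv.
  by exfalso; apply: not_EFX; apply: (EFX_of_alpha_min_inv k_gt1 c_1k X_MPB p_1k) => //; lra.
split => //; apply/subsetP => e eXj; rewrite inE alpha1 /alpha Xj1 // divr1.
case: (c_1k i e) => [-> | c_k]; first by rewrite eqxx.
exfalso; apply: not_EFX; apply: (EFX_of_alpha_min1 k_gt1 c_1k X_MPB p_1k) => //.
by have := cost_N_L_ge k_gt1 c_1k i j_N_L eXj; rewrite c_k; lra.
Qed.
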